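(* Let $A_0$ be a commutative ring, $d_1,\dots,d_g\in\mathbb{N}$, and let $A=A_0[Y_1,\dots,Y_g]$ be $\mathbb{Z}^2$-graded by $\deg Y_j=(d_j,1)$. Let $F$ be a finitely generated $\mathbb{Z}^2$-graded free $A$-module with homogeneous basis $e_1,\dots,e_p$, let $<$ be a monomial order on $F$, and let $U$ be a $\mathbb{Z}^2$-graded $A$-submodule of $F$. Then $\rho_{F/U}(v)=\rho_{F/\operatorname{in}_<(U)}(v)$ for all $v\in\mathbb{Z}$.
   Context: For a $\mathbb{Z}^2$-graded $A$-module $N$ and $v\in\mathbb{Z}$, $\rho_N(v)=\sup\{i\in\mathbb{Z} : N_{(i,v)}\neq0\}\in\mathbb{Z}\cup\{\pm\infty\}$. Monomials of $F$ are the elements $Y^\alpha e_k$ ($\alpha\in\mathbb{N}^g$); a monomial order on $F$ is a well-ordering of these monomials compatible with multiplication by monomials of $A$ (if $Y^\alpha e_k<Y^\beta e_l$ then $Y^\gamma Y^\alpha e_k<Y^\gamma Y^\beta e_l$). Writing a nonzero $u\in F$ as an $A_0$-linear combination of distinct monomials, its leading term $\operatorname{in}_<(u)=aY^\alpha e_k$ is the largest monomial occurring together with its (nonzero) coefficient $a\in A_0$. $\operatorname{in}_<(U)$ is the $A_0$-submodule of $F$ generated by the leading terms (with coefficients) of all nonzero elements of $U$; it is an $A$-submodule of $F$. *)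

From HB Require Import structures.
From mathcomp Require Import all_boot all_order all_algebra.
From mathcomp Require Import mpoly.
Set Implicit Arguments. Unset Strict Implicit. Unset Printing Implicit Defensive.
Import Order.TTheory GRing.Theory Num.Theory.
Local Open Scope ring_scope.

(* Monomials Y^alpha e_k of F, encoded as pairs (alpha, k). *)
Definition mon (g p : nat) := ('X_{1..g} * 'I_p)%type.

(* Elements of the free module F = A^p, A = A0[Y_1..Y_g]: a p-tuple of
   polynomials (component k = coefficient of e_k). *)
Definition fmod (R : comNzRingType) (g p : nat) := {ffun 'I_p -> {mpoly R[g]}}.

Definition fcoef (R : comNzRingType) g p (u : fmod R g p) (m : mon g p) : R :=
  (u m.2)@_(m.1).

(* Z^2-degree of Y^alpha e_k: deg e_k = (a k, b k), deg Y_j = (d j, 1). *)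
Definition mdeg2 g p (d : 'I_g -> nat) (a b : 'I_p -> int) (m : mon g p)
  : int * int :=
  (a m.2 + ((\sum_(j < g) (m.1 j * d j))%N)%:Z, b m.2 + (mdeg m.1)%:Z).

Definition is_homog (R : comNzRingType) g p d a b (i v : int) (u : fmod R g p) :=
  forall m : mon g p, fcoef u m != 0 -> @mdeg2 g p d a b m = (i, v).

Definition hcomp (R : comNzRingType) g p d a b (delta : int * int)
  (u : fmod R g p) : fmod R g p :=
  [ffun k => \sum_(al <- msupp (u k) | @mdeg2 g p d a b (al, k) == delta)
               (u k)@_al *: 'X_[al]].

Definition graded_submodule (R : comNzRingType) g p d a b
  (U : fmod R g p -> Prop) :=
  [/\ U 0,
      (forall x y, U x -> U y -> U (x + y)),
      (forall (f : {mpoly R[g]}) x, U x -> U [ffun k => f * x k]) &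
      (forall x delta, U x -> U (@hcomp R g p d a b delta x))].

Definition monomial_order g p (lt : mon g p -> mon g p -> Prop) :=
  [/\ (forall m, ~ lt m m),
      (forall m1 m2 m3, lt m1 m2 -> lt m2 m3 -> lt m1 m3),
      (forall m1 m2, m1 = m2 \/ lt m1 m2 \/ lt m2 m1),
      well_founded lt &
      (forall (al be ga : 'X_{1..g}) (k l : 'I_p),
          lt (al, k) (be, l) -> lt ((ga + al)%MM, k) ((ga + be)%MM, l))].

Definition is_lead (R : comNzRingType) g p (lt : mon g p -> mon g p -> Prop)
  (u : fmod R g p) (m : mon g p) :=
  fcoef u m != 0 /\ (forall m', fcoef u m' != 0 -> m' = m \/ lt m' m).

Definition term_at (R : comNzRingType) g p (u : fmod R g p) (m : mon g p)
  : fmod R g p :=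
  [ffun l => if l == m.2 then fcoef u m *: 'X_[m.1] else 0].

(* in_<(U): the A0-submodule of F generated by the leading terms of all
   nonzero elements of U (smallest A0-submodule containing them) *)
Definition initial_module (R : comNzRingType) g p
  (lt : mon g p -> mon g p -> Prop) (U : fmod R g p -> Prop)
  (w : fmod R g p) : Prop :=
  forall V : fmod R g p -> Prop,
    V 0 -> (forall x y, V x -> V y -> V (x + y)) ->
    (forall (c : R) x, V x -> V (c *: x)) ->
    (forall u m, U u -> u != 0 -> is_lead lt u m -> V (term_at u m)) ->
    V w.

(* (F/W)_(i,v) <> 0, where W is a (graded) submodule: the image of F_(i,v)
   in F/W is nonzero iff some element of F_(i,v) is not in W *)
Definition quot_comp_nonzero (R : comNzRingType) g p d a b
  (W : fmod R g p -> Prop) (i v : int) :=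
  exists u : fmod R g p, @is_homog R g p d a b i v u /\ ~ W u.

Inductive zbar := ZNegInf | ZFin of int | ZPosInf.

Definition zbar_le (x y : zbar) : Prop :=
  match x, y with
  | ZNegInf, _ => True
  | _, ZPosInf => True
  | ZFin i, ZFin j => (i <= j)%R
  | _, _ => False
  end.

Definition is_sup (S : int -> Prop) (r : zbar) :=
  (forall i, S i -> zbar_le (ZFin i) r) /\
  (forall r', (forall i, S i -> zbar_le (ZFin i) r') -> zbar_le r r').

Definition is_rho (R : comNzRingType) g p d a b (W : fmod R g p -> Prop)
  (v : int) (r : zbar) :=
  is_sup (fun i => @quot_comp_nonzero R g p d a b W i v) r.

From HB Require Import structures.
From mathcomp Require Import all_boot all_order all_algebra.
From mathcomp Require Import mpoly.
From Stdlib Require Import Classical.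
Set Implicit Arguments. Unset Strict Implicit. Unset Printing Implicit Defensive.
Import Order.TTheory GRing.Theory Num.Theory.
Local Open Scope ring_scope.

(* For each bidegree (i, v), F_(i,v) is contained in U iff it is contained in
   in_<(U); hence F/U and F/in_<(U) have the same nonzero graded pieces.  If
   F_(i,v) lies in U, every term of a homogeneous w is a homogeneous element of
   U and its own leading term.  Conversely, induct on the leading monomial m
   of a homogeneous w of degree (i, v): the term of w at m lies in in_<(U),
   which is only an A_0-span of leading terms, but replacing each element of U
   involved by its (i, v)-component gives a homogeneous u in U with the same
   coefficient at m and no monomial above m, and w - u lives below m. *)

Lemma mcoeff_sum_msupp (R : comNzRingType) n (q : {mpoly R[n]})
    (P : pred 'X_{1..n}) be :
  (\sum_(al <- msupp q | P al) q@_al *: 'X_[al])@_be = if P be then q@_be else 0.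
Proof.
rewrite raddf_sum /=; under eq_bigr => al _ do rewrite mcoeffZ mcoeffX.
have [be_q|be_nq] := boolP (be \in msupp q).
  rewrite big_mkcond (bigD1_seq be) //= eqxx mulr1 big1 ?addr0 => [|al].
    by case: (P be).
  by rewrite eq_sym => /negbTE->; rewrite mulr0; case: (P al).
rewrite memN_msupp_eq0 // if_same big1_seq // => al /andP[_ al_q].
by case: eqP al_q be_nq => [-> ->|_ _ _]; rewrite ?mulr0.
Qed.

Lemma exists_max_seq (T : eqType) (lt : T -> T -> Prop) :
  (forall x y z, lt x y -> lt y z -> lt x z) ->
  (forall x y, x = y \/ lt x y \/ lt y x) ->
  forall s : seq T, s != [::] ->
  exists2 x, x \in s & forall y, y \in s -> y = x \/ lt y x.
Proof.
move=> lt_trans lt_total; elim=> [//|x [|y s] IH] _.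
  by exists x => [|z]; rewrite ?mem_seq1 // => /eqP->; left.
have [m m_s m_max] := IH isT.
have [x_le_m|m_x] : (x = m \/ lt x m) \/ lt m x.
- by case: (lt_total x m) => [->|[]]; [left; left|left; right|right].
- exists m => [|w]; first by rewrite inE m_s orbT.
  by rewrite inE => /predU1P[->|/m_max].
exists x => [|w]; first exact: mem_head.
rewrite inE => /predU1P[->|/m_max[->|w_m]]; [left|right|right] => //.
exact: lt_trans w_m m_x.
Qed.

Lemma eq_is_sup (S T : int -> Prop) r :
  (forall i, S i <-> T i) -> is_sup S r <-> is_sup T r.
Proof.
move=> ST; split=> -[ub least]; split=> [i /ST/ub //|r' ub'];
  by apply: least => i /ST/ub'.
Qed.

Section FreeModule.
Variables (R : comNzRingType) (g p : nat).
Implicit Types (u w : fmod R g p) (m : mon g p) (P : mon g p -> Prop).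

Lemma fmodP u w : (forall m, fcoef u m = fcoef w m) -> u = w.
Proof. by move=> uw; apply/ffunP => k; apply/mpolyP => al; apply: uw (al, k). Qed.

Lemma fcoef0 m : fcoef (0 : fmod R g p) m = 0.
Proof. by rewrite /fcoef ffunE mcoeff0. Qed.

Lemma fcoefD u w m : fcoef (u + w) m = fcoef u m + fcoef w m.
Proof. by rewrite /fcoef ffunE mcoeffD. Qed.

Lemma fcoefN u m : fcoef (- u) m = - fcoef u m.
Proof. by rewrite /fcoef ffunE mcoeffN. Qed.

Lemma fcoefB u w m : fcoef (u - w) m = fcoef u m - fcoef w m.
Proof. by rewrite fcoefD fcoefN. Qed.

Lemma fcoefZ c u m : fcoef (c *: u) m = c * fcoef u m.
Proof. by rewrite /fcoef ffunE mcoeffZ. Qed.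

Lemma fcoefCM c u m : fcoef [ffun k => c%:MP * u k] m = c * fcoef u m.
Proof. by rewrite /fcoef ffunE mcoeffCM. Qed.

Lemma fcoef_hcomp d a b delta u m :
  fcoef (hcomp d a b delta u) m = if mdeg2 d a b m == delta then fcoef u m else 0.
Proof. by case: m => al k; rewrite /fcoef /hcomp ffunE mcoeff_sum_msupp. Qed.

Lemma fcoef_term u m0 m :
  fcoef (term_at u m0) m = if m == m0 then fcoef u m0 else 0.
Proof.
case: m m0 => al k [be l]; rewrite /fcoef /term_at ffunE xpair_eqE /=.
have [<-|_] := eqVneq k l; last by rewrite andbF mcoeff0.
by rewrite andbT mcoeffZ mcoeffX eq_sym; case: eqP; rewrite ?mulr1 ?mulr0.
Qed.

Lemma term_atK u m : term_at (term_at u m) m = term_at u m.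
Proof. by apply: fmodP => m'; rewrite !fcoef_term eqxx. Qed.

Definition fsupp u : seq (mon g p) :=
  [seq (al, k) | k <- enum 'I_p, al <- msupp (u k)].

Lemma mem_fsupp u m : (m \in fsupp u) = (fcoef u m != 0).
Proof.
case: m => al k; rewrite /fcoef /= -mcoeff_msupp; apply/allpairsPdep/idP.
  by case=> [l [be [_ be_l [-> ->]]]].
by move=> al_k; exists k, al; rewrite mem_enum.
Qed.

Lemma fsupp_eq0 u : u != 0 -> fsupp u != [::].
Proof.
apply: contra_neq => u0; apply: fmodP => m; rewrite fcoef0.
by apply/eqP; rewrite -[_ == 0]negbK -mem_fsupp u0.
Qed.

Lemma fmod_sum_terms u : u = \sum_(m <- fsupp u) term_at u m.
Proof.
rewrite big_allpairs_dep /= big_enum /=; apply/ffunP => l.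
rewrite sum_ffunE (bigD1 l) //= [X in _ + X]big1 ?addr0 => [|k /negbTE kl].
  rewrite sum_ffunE {1}(mpolyE (u l)).
  by apply: eq_bigr => al _; rewrite ffunE eqxx.
by rewrite sum_ffunE big1 // => al _; rewrite ffunE eq_sym kl.
Qed.

Definition supported P u := forall m, fcoef u m != 0 -> P m.

Lemma supported0 P : supported P 0.
Proof. by move=> m; rewrite fcoef0 eqxx. Qed.

Lemma supportedD P u w : supported P u -> supported P w -> supported P (u + w).
Proof.
move=> Pu Pw m; rewrite fcoefD.
by have [->|/Pu //] := eqVneq (fcoef u m) 0; rewrite add0r => /Pw.
Qed.

Lemma supportedN P u : supported P u -> supported P (- u).
Proof. by move=> Pu m; rewrite fcoefN oppr_eq0 => /Pu. Qed.

Lemma supportedB P u w : supported P u -> supported P w -> supported P (u - w).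
Proof. by move=> Pu /supportedN; apply: supportedD. Qed.

Lemma supportedCM P c u : supported P u -> supported P [ffun k => c%:MP * u k].
Proof.
move=> Pu m; rewrite fcoefCM.
by have [->|/Pu //] := eqVneq (fcoef u m) 0; rewrite mulr0 eqxx.
Qed.

Lemma supported_hcomp P d a b delta u :
  supported P u -> supported P (hcomp d a b delta u).
Proof.
by move=> Pu m; rewrite fcoef_hcomp; case: ifP => _; [apply: Pu|rewrite eqxx].
Qed.

Lemma homog_hcomp d a b i v u : is_homog d a b i v (hcomp d a b (i, v) u).
Proof. by move=> m; rewrite fcoef_hcomp; case: ifP => [/eqP|_]; rewrite ?eqxx. Qed.

Lemma supported_term P u m : supported P u -> supported P (term_at u m).
Proof.
move=> Pu m'; rewrite fcoef_term.
by case: ifP => [/eqP-> /Pu //|_]; rewrite eqxx.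
Qed.

End FreeModule.

Section LeadingMonomial.
Variables (R : comNzRingType) (g p : nat) (lt : mon g p -> mon g p -> Prop).
Implicit Types (u w : fmod R g p) (m : mon g p).

Local Notation below m := (fun m' => m' = m \/ lt m' m).

Lemma lead_term_at u m : fcoef u m != 0 -> is_lead lt (term_at u m) m.
Proof.
move=> um; rewrite /is_lead fcoef_term eqxx; split=> // m'.
by rewrite fcoef_term; case: ifP => [/eqP->|_]; [left|rewrite eqxx].
Qed.

Lemma term_at_neq0 u m : fcoef u m != 0 -> term_at u m != 0.
Proof.
by apply: contra_neq => um0; have := fcoef_term u m m; rewrite um0 fcoef0 eqxx.
Qed.

Lemma supported_ltB u w m :
  supported (below m) u -> supported (below m) w -> fcoef u m = fcoef w m ->
  supported (lt^~ m) (u - w).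
Proof.
move=> u_below w_below uw m' uw_m'.
case: (supportedB u_below w_below uw_m') => // m'm.
by move: uw_m'; rewrite m'm fcoefB uw subrr eqxx.
Qed.

Hypothesis lt_order : monomial_order lt.

Lemma lead_exists u : u != 0 -> exists m, is_lead lt u m.
Proof.
case: lt_order => _ lt_trans lt_total _ _ /fsupp_eq0.
case/(exists_max_seq lt_trans lt_total) => m; rewrite mem_fsupp => um m_max.
by exists m; split=> // m' um'; apply: m_max; rewrite mem_fsupp.
Qed.

End LeadingMonomial.

Section InitialModule.
Variables (R : comNzRingType) (g p : nat) (d : 'I_g -> nat) (a b : 'I_p -> int).
Variables (lt : mon g p -> mon g p -> Prop) (U : fmod R g p -> Prop).
Hypotheses (lt_order : monomial_order lt) (U_graded : graded_submodule d a b U).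
Implicit Types (u w : fmod R g p) (m : mon g p).

Local Notation below m := (fun m' => m' = m \/ lt m' m).

Lemma homog_U_initial_module i v :
  (forall w, is_homog d a b i v w -> U w) ->
  forall w, is_homog d a b i v w -> initial_module lt U w.
Proof.
move=> homog_U w w_homog V V0 VD _ V_lead.
rewrite (fmod_sum_terms w) big_seq; apply: (big_ind V) => // m.
rewrite mem_fsupp -term_atK => wm; apply: V_lead.
- by apply: homog_U; apply: supported_term w_homog.
- exact: term_at_neq0.
- exact: lead_term_at.
Qed.

Lemma initial_module_lift i v w m :
  initial_module lt U w -> mdeg2 d a b m = (i, v) ->
  exists u, [/\ U u, is_homog d a b i v u, fcoef u m = fcoef w m &
               supported (below m) u].
Proof.
case: U_graded => U0 UD UM UH w_in m_deg; pattern w; apply: w_in.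
- by exists 0; rewrite fcoef0; split=> //; apply: supported0.
- move=> x y [ux [Uux ux_homog uxx ux_below]] [uy [Uuy uy_homog uyy uy_below]].
  exists (ux + uy); rewrite !fcoefD uxx uyy.
  by split=> //; [apply: UD|apply: supportedD..].
- move=> c x [u [Uu u_homog ux u_below]].
  exists [ffun k => c%:MP * u k]; rewrite fcoefCM fcoefZ ux.
  by split=> //; [apply: UM|apply: supportedCM..].
move=> u m0 Uu _; have [<- [_ u_below]|mm0 _] := eqVneq m m0; last first.
  exists 0; rewrite fcoef0 fcoef_term (negbTE mm0).
  by split=> //; apply: supported0.
exists (hcomp d a b (i, v) u); rewrite fcoef_hcomp fcoef_term m_deg !eqxx.
by split=> //; [apply: UH|apply: homog_hcomp|apply: supported_hcomp].
Qed.

Lemma homog_initial_module_U i v :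
  (forall w, is_homog d a b i v w -> initial_module lt U w) ->
  forall w, is_homog d a b i v w -> U w.
Proof.
case: (lt_order) => _ _ _ lt_wf _ homog_in.
case: U_graded => U0 UD _ _.
suff below_U m w : is_homog d a b i v w -> supported (below m) w -> U w.
  move=> w w_homog; have [->//|/(lead_exists lt_order)[m [_]]] := eqVneq w 0.
  exact: below_U.
elim/(well_founded_ind lt_wf): m w => m IH w w_homog w_below.
have strictly_below_U w' :
    is_homog d a b i v w' -> supported (lt^~ m) w' -> U w'.
  move=> w'_homog w'_lt; have [->//|] := eqVneq w' 0.
  by case/(lead_exists lt_order) => m' [/w'_lt/IH]; apply.
have [u [Uu u_homog uw u_below]] : exists u,
    [/\ U u, is_homog d a b i v u, fcoef u m = fcoef w m &
         supported (below m) u].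
  have [wm0|/w_homog m_deg] := eqVneq (fcoef w m) 0.
    by exists 0; rewrite fcoef0 wm0; split=> //; apply: supported0.
  exact: initial_module_lift (homog_in w w_homog) m_deg.
rewrite -(subrK u w); apply: UD Uu; apply: strictly_below_U.
  exact: supportedB.
exact: supported_ltB.
Qed.

Lemma quot_comp_nonzeroE (W : fmod R g p -> Prop) i v :
  quot_comp_nonzero d a b W i v <-> ~ (forall u, is_homog d a b i v u -> W u).
Proof.
split=> [[u [u_homog Wu]] homog_W|not_homog_W]; first exact/Wu/homog_W.
apply: NNPP => no_u; apply: not_homog_W => u u_homog.
by apply: NNPP => Wu; apply: no_u; exists u.
Qed.

Lemma quot_comp_nonzero_initial i v :
  quot_comp_nonzero d a b U i v <->
  quot_comp_nonzero d a b (initial_module lt U) i v.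
Proof.
rewrite !quot_comp_nonzeroE.
split=> not_homog_sub homog_sub; apply: not_homog_sub.
  exact: homog_initial_module_U.
exact: homog_U_initial_module.
Qed.

End InitialModule.

Theorem lemma3p2 (R : comNzRingType) (g p : nat) (d : 'I_g -> nat)
  (a b : 'I_p -> int) (lt : mon g p -> mon g p -> Prop)
  (U : fmod R g p -> Prop) :
  monomial_order lt ->
  graded_submodule d a b U ->
  forall (v : int) (r : zbar),
    is_rho d a b U v r <-> is_rho d a b (initial_module lt U) v r.
Proof.
move=> lt_order U_graded v r; apply: eq_is_sup => i.
exact: quot_comp_nonzero_initial.
Qed.
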